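(* Let $X$ be a compact metric space and $f\colon X\to X$ continuous with $h_{\mathrm{top}}(f)<\infty$. Given $\eta,\phi\in C(X)$ and $Z\subset X$, suppose there exist $\alpha,\beta\in\mathbb{R}$ such that $$\alpha\le\liminf_{n\to\infty}\frac1nS_n\phi(x)\le\limsup_{n\to\infty}\frac1nS_n\phi(x)\le\beta$$ for every $x\in Z$. Then $P_Z(\eta)+\alpha t\le P_Z(\eta+t\phi)\le P_Z(\eta)+\beta t$ for all $t>0$.
   Context: $S_n\phi=\sum_{k=0}^{n-1}\phi\circ f^k$; $B(x,n,\delta)=\{y\mid d(f^kx,f^ky)<\delta,\ 0\le k\le n\}$. Pressure on a set $Z\subset X$: let $\mathcal{P}(Z,N,\delta)$ be the collection of countable sets $\{(x_i,n_i)\}\subset Z\times\{N,N+1,\dots\}$ with $Z\subset\bigcup_iB(x_i,n_i,\delta)$; $m_P(Z,s,\phi,\delta)=\lim_{N\to\infty}\inf_{\mathcal{P}(Z,N,\delta)}\sum_i\exp(-n_is+S_{n_i}\phi(x_i))$; $P_Z(\phi,\delta)=\inf\{s\mid m_P(Z,s,\phi,\delta)=0\}$; $P_Z(\phi)=\lim_{\delta\to0}P_Z(\phi,\delta)$; $P_\emptyset=-\infty$. *)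

From HB Require Import structures.
From mathcomp Require Import all_boot all_order all_algebra.
From mathcomp Require Import all_classical all_reals all_analysis.
Set Implicit Arguments. Unset Strict Implicit. Unset Printing Implicit Defensive.
Import Order.TTheory GRing.Theory Num.Theory.
Import numFieldNormedType.Exports.
Local Open Scope classical_set_scope.
Local Open Scope ring_scope.

Section Pressure.
Context {R : realType} {X : metricType R}.

Definition Sn (f : X -> X) (phi : X -> R) (n : nat) (x : X) : R :=
  \sum_(0 <= k < n) phi (iter k f x).

Definition bowen_ball (f : X -> X) (x : X) (n : nat) (delta : R) : set X :=
  [set y | forall k, (k <= n)%N -> mdist (iter k f x) (iter k f y) < delta].

Definition cover_family (f : X -> X) (Z : set X) (N : nat) (delta : R)
    (C : set (X * nat)) : Prop :=
  [/\ countable C,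
      C `<=` [set p | Z p.1 /\ (N <= p.2)%N] &
      Z `<=` \bigcup_(p in C) bowen_ball f p.1 p.2 delta].

Definition mP (f : X -> X) (Z : set X) (s : R) (phi : X -> R) (delta : R)
    : \bar R :=
  limn (fun N : nat => ereal_inf
    [set \esum_(p in C) (expR (- (p.2%:R * s) + Sn f phi p.2 p.1))%:E
       | C in [set C | cover_family f Z N delta C]]).

Definition PZdelta (f : X -> X) (Z : set X) (phi : X -> R) (delta : R)
    : \bar R :=
  ereal_inf [set s%:E | s in [set s : R | mP f Z s phi delta = 0%E]].

Definition PZ (f : X -> X) (Z : set X) (phi : X -> R) : \bar R :=
  if pselect (Z = set0) then -oo%E
  else lim (PZdelta f Z phi delta @[delta --> 0^'+]).

Definition separated (f : X -> X) (n : nat) (delta : R) (E : seq X) : Prop :=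
  uniq E /\ forall x y, x \in E -> y \in E -> x != y ->
    exists k, (k < n)%N /\ delta <= mdist (iter k f x) (iter k f y).

Definition sep_num (f : X -> X) (n : nat) (delta : R) : R :=
  sup [set (size E)%:R | E in [set E | separated f n delta E]].

Definition htop (f : X -> X) : \bar R :=
  lim (limn_esup (fun n : nat => ((n%:R)^-1 * ln (sep_num f n delta))%:E)
        @[delta --> 0^'+]).

End Pressure.

From HB Require Import structures.
From mathcomp Require Import all_boot all_order all_algebra.
From mathcomp Require Import all_classical all_reals all_analysis.
From mathcomp Require Import ring lra.
Import Order.TTheory GRing.Theory Num.Theory.
Import numFieldNormedType.Exports.
Local Open Scope classical_set_scope.
Local Open Scope ring_scope.
Set Implicit Arguments. Unset Strict Implicit. Unset Printing Implicit Defensive.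

(* If lim sup (1/n) S_n phi <= beta on Z and phi varies by less than gam on
   delta-close points, then along a Bowen ball B(x,n,delta) that meets Z at a
   point y where S_n phi y <= n (beta + eps), we get S_n phi x <= n (beta + eps
   + gam).  Hence the weight exp(-n s + S_n (eta + t phi) x) of the pair (x,n)
   is at most exp(-n (s - t (beta + eps + gam)) + S_n eta x): every cover
   witnessing m_P(Z, s, eta, delta) = 0 also witnesses
   m_P(Z, s + t (beta + eps + gam), eta + t phi, delta) = 0, once Z is sliced
   according to the time after which the Birkhoff averages stay below
   beta + eps, and the slices are covered with geometrically decreasing
   costs.  Letting eps, gam, delta go to 0 gives the upper bound; the lower
   bound is the upper bound for eta + t phi and -phi. *)

Lemma esum_subset (R : realType) (T : choiceType) (A B : set T)
    (a : T -> \bar R) :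
  A `<=` B -> (forall x, (0 <= a x)%E) ->
  (\esum_(i in A) a i <= \esum_(i in B) a i)%E.
Proof.
move=> AB a0; rewrite esum_mkcond [X in (_ <= X)%E]esum_mkcond.
apply: le_esum => i _; case: ifPn => iA; last by case: ifPn.
by rewrite ifT // inE; apply: AB; rewrite -inE.
Qed.

Lemma esum_bigcup_le (R : realType) (T : choiceType) (J : nat -> set T)
    (a : T -> \bar R) :
  (forall x, (0 <= a x)%E) ->
  (\esum_(i in \bigcup_k J k) a i <= \esum_(k in [set: nat]) \esum_(j in J k) a j)%E.
Proof.
move=> a0; rewrite seqDU_bigcup_eq esum_bigcupT //.
by apply: le_esum => k _; apply: esum_subset => //; exact: subset_seqDU.
Qed.

Lemma sum_geometric_halves (R : realFieldType) (e : R) n :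
  \sum_(0 <= i < n) e / 2 ^+ i.+1 = e - e / 2 ^+ n.
Proof.
elim: n => [|n IH]; first by rewrite big_geq // expr0 divr1 subrr.
rewrite big_nat_recr //= IH exprS.
have : (2:R) ^+ n != 0 by rewrite expf_neq0.
by move=> ?; field.
Qed.

Lemma esum_bigcup_geometric_le (R : realType) (T : choiceType)
    (J : nat -> set T) (a : T -> \bar R) (e : R) :
  0 < e -> (forall x, (0 <= a x)%E) ->
  (forall k, (\esum_(i in J k) a i <= (e / 2 ^+ k.+1)%:E)%E) ->
  (\esum_(i in \bigcup_k J k) a i <= e%:E)%E.
Proof.
move=> e0 a0 aJ; have ek0 k : (0 <= (e / 2 ^+ k.+1)%:E)%E.
  by rewrite lee_fin divr_ge0 ?ltW // exprn_ge0.
apply: (le_trans (esum_bigcup_le _ a0)).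
apply: (le_trans (le_esum (fun k _ => aJ k))).
rewrite -nneseries_esumT //; apply: lime_le; first exact: is_cvg_nneseries.
apply: nearW => n; rewrite sumEFin lee_fin sum_geometric_halves lerBlDr lerDl.
by rewrite divr_ge0 ?ltW // exprn_ge0.
Qed.

Lemma lee_Dfin_approx (R : realType) (A B : \bar R) (c : R) :
  (forall r : R, (B < r%:E)%E -> (A <= (r + c)%:E)%E) -> (A <= B + c%:E)%E.
Proof.
case: B => [b| |] H.
- apply/lee_addgt0Pr => e e0.
  apply: (le_trans (H (b + e) _)); first by rewrite lte_fin ltrDl.
  by rewrite -!EFinD lee_fin; lra.
- by rewrite leey.
- case: A H => [a| |] H //.
  + by have := H (a - c - 1) (ltNyr _); rewrite lee_fin => ?; exfalso; lra.
  + by have := H 0 (ltNyr _).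
Qed.

Section Pressure.
Context {R : realType} {X : metricType R}.

Lemma compact_uniform_continuous (g : X -> R) :
  compact [set: X] -> continuous g ->
  forall e : R, 0 < e -> exists2 d : R, 0 < d &
    forall a b, mdist a b < d -> `|g a - g b| < e.
Proof.
move=> cX cg e e0.
have near_unif x : [set: X] x -> \forall x' \near x & d \near 0^'+,
    forall b, mdist x' b < d -> `|g x' - g b| < e.
  move=> _; have /cvgrPdist_lt /(_ (e / 2)) := cg x.
  rewrite divr_gt0 // => /(_ isT) /nbhs_ballP [r r0 rP].
  have r20 : 0 < r / 2 by rewrite divr_gt0.
  exists (ball x (r / 2), [set d | 0 < d < r / 2]).
    split; first exact: nbhsx_ballx.
    by near=> d; apply/andP; split; near: d;
      [exact: nbhs_right_gt | exact: nbhs_right_lt].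
  move=> [x' d] [/= + /andP[_ dr]] b; rewrite ballEmdist /= => xx' x'b.
  have /(_ x') := rP; have /(_ b) := rP; rewrite !ballEmdist /= => hb hx'.
  have r2r : r / 2 < r by rewrite ltr_pdivrMr // ltr_pMr // ltr1n.
  have {}hx' := hx' (lt_trans xx' r2r).
  have {}hb : `|g x - g b| < e / 2.
    apply: hb; apply: (le_lt_trans (metric_triangle x x' b)).
    by rewrite [r]splitr ltrD // (lt_trans x'b dr).
  rewrite (_ : g x' - g b = (g x - g b) - (g x - g x')); last by ring.
  by apply: (le_lt_trans (ler_normB _ _)); rewrite [e]splitr ltrD.
have := (compact_near_coveringP [set: X]).1 cX R (0^'+)
  (fun d x' => forall b, mdist x' b < d -> `|g x' - g b| < e).
move=> /(_ _ near_unif) unif; near (0:R)^'+ => d.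
exists d; first by near: d; exact: nbhs_right_gt.
by move=> a b; have := near unif d; apply.
Unshelve. all: end_near.
Qed.

Variable f : X -> X.

Lemma SnDZ (g h : X -> R) (t : R) n x :
  Sn f (fun y => g y + t * h y) n x = Sn f g n x + t * Sn f h n x.
Proof. by rewrite /Sn big_split /= mulr_sumr. Qed.

Lemma Sn_bowen_ball_le (phi : X -> R) (gam delta : R) x y n :
  (forall a b, mdist a b < delta -> phi a <= phi b + gam) ->
  bowen_ball f x n delta y -> Sn f phi n x <= Sn f phi n y + n%:R * gam.
Proof.
move=> phi_unif xy; apply: (@le_trans _ _ (\sum_(0 <= k < n) (phi (iter k f y) + gam))).
  by apply: ler_sum_nat => k /andP[_ kn]; apply/phi_unif/xy/ltnW.
by rewrite big_split sumr_const_nat subn0 mulr_natl.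
Qed.

Lemma Sn_eventually_le (phi : X -> R) (b : R) x :
  (limn_esup (fun n : nat => ((n%:R)^-1 * Sn f phi n x)%:E) <= b%:E)%E ->
  forall eps, 0 < eps -> exists M, forall n, (M <= n)%N ->
    Sn f phi n x <= n%:R * (b + eps).
Proof.
set u := (fun n : nat => _); move=> ub eps eps0.
rewrite limn_esup_lim (cvg_lim _ (@cvg_esups_inf _ u)) // in ub.
have /ereal_inf_lt [_ [M _ <-] hM] : (ereal_inf (range (esups u)) < (b + eps)%:E)%E.
  by apply: (le_lt_trans ub); rewrite lte_fin ltrDl.
exists M.+1 => n Mn; have n0 : (0 < n%:R :> R) by rewrite ltr0n (leq_trans _ Mn).
have /le_lt_trans /(_ hM) : (u n <= esups u M)%E.
  by apply: ereal_sup_ubound; exists n => //=; exact: ltnW.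
by rewrite /u lte_fin mulrC ltr_pdivrMr // mulrC => /ltW.
Qed.

Lemma cover_family_le Z N N' delta C : (N <= N')%N ->
  cover_family f Z N' delta C -> cover_family f Z N delta C.
Proof.
move=> NN' [cC sC zC]; split => // p /sC [Zp Np].
by split => //; exact: leq_trans Np.
Qed.

Lemma cover_family_bigcup Z (Zs : nat -> set X) N delta
    (Cs : nat -> set (X * nat)) :
  Z `<=` \bigcup_k Zs k -> (forall k, cover_family f Z N delta (Cs k)) ->
  cover_family f Z N delta (\bigcup_k [set p | Cs k p /\
     exists2 y, Zs k y & bowen_ball f p.1 p.2 delta y]).
Proof.
move=> ZZs Cs_cover; split.
- apply: bigcup_countable => // k _; have [cC _ _] := Cs_cover k.
  by apply: sub_countable cC; apply: subset_card_le => p [].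
- by move=> p [k _ [Ckp _]]; have [_ /(_ _ Ckp)] := Cs_cover k.
- move=> x Zx; have [k _ Zsx] := ZZs x Zx; have [_ _ /(_ x Zx)] := Cs_cover k.
  by case=> p Cp px; exists p => //; exists k => //; split => //; exists x.
Qed.

Definition weight (g : X -> R) (s : R) (p : X * nat) : \bar R :=
  (expR (- (p.2%:R * s) + Sn f g p.2 p.1))%:E.

Definition cover_inf Z s g delta (N : nat) : \bar R :=
  ereal_inf [set \esum_(p in C) weight g s p
               | C in [set C | cover_family f Z N delta C]].

Lemma weight_ge0 g s p : (0 <= weight g s p)%E.
Proof. by rewrite lee_fin expR_ge0. Qed.

Lemma cover_inf_ge0 Z s g delta N : (0 <= cover_inf Z s g delta N)%E.
Proof.
by apply: le_ereal_inf_tmp => _ [C _ <-]; apply: esum_ge0 => p _; exact: weight_ge0.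
Qed.

Lemma cover_inf_nondecreasing Z s g delta :
  nondecreasing_seq (cover_inf Z s g delta).
Proof.
move=> N N' NN'; apply: ereal_inf_le_tmp => _ [C CN' <-].
by exists C => //; exact: cover_family_le CN'.
Qed.

Lemma mP_eq0P Z s g delta : mP f Z s g delta = 0%E <->
  (forall N (e : R), 0 < e -> exists2 C, cover_family f Z N delta C &
     (\esum_(p in C) weight g s p <= e%:E)%E).
Proof.
have -> : mP f Z s g delta = ereal_sup (range (cover_inf Z s g delta)).
  by apply: cvg_lim => //; exact/ereal_nondecreasing_cvgn/cover_inf_nondecreasing.
split => [m0 N e e0|small].
  have : (cover_inf Z s g delta N < e%:E)%E.
    by rewrite (le_lt_trans _ (_ : 0 < e%:E)%E) ?lte_fin // -m0 ereal_sup_ubound.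
  by move=> /ereal_inf_lt [_ [C CN <-] /ltW]; exists C.
apply/eqP; rewrite eq_le; apply/andP; split; last first.
  by apply: le_ereal_sup_tmp; exists (cover_inf Z s g delta 0);
    [exists 0%N | exact: cover_inf_ge0].
apply: ge_ereal_sup => _ [N _ <-]; apply/lee_addgt0Pr => e e0; rewrite add0e.
have [C CN le] := small N e e0.
by apply: ge_ereal_inf; exists (\esum_(p in C) weight g s p) => //; exists C.
Qed.

Lemma weight_shift_le (eta phi : X -> R) (t c s : R) x n :
  0 <= t -> Sn f phi n x <= n%:R * c ->
  (weight (fun y => (eta y + t * phi y)%R) (s + t * c)%R (x, n)
   <= weight eta s (x, n))%E.
Proof.
move=> t0 phic; rewrite /weight /= lee_fin ler_expR SnDZ.
by have := ler_wpM2l t0 phic; lra.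
Qed.

Lemma mP_shift_eq0 Z (eta phi : X -> R) (beta t gam eps s delta : R) :
  0 < t ->
  (forall x, Z x -> exists M, forall n, (M <= n)%N ->
      Sn f phi n x <= n%:R * (beta + eps)) ->
  (forall a b, mdist a b < delta -> phi a <= phi b + gam) ->
  mP f Z s eta delta = 0%E ->
  mP f Z (s + t * (beta + eps + gam)) (fun x => eta x + t * phi x) delta = 0%E.
Proof.
move=> t0 Sn_le phi_unif /mP_eq0P small; apply/mP_eq0P => N e e0.
pose Zs M := [set x | forall n, (M <= n)%N -> Sn f phi n x <= n%:R * (beta + eps)].
have /choice [Cs Cs_small] : forall M, exists C,
    cover_family f Z (maxn N M) delta C /\
    (\esum_(p in C) weight eta s p <= (e / 2 ^+ M.+1)%:E)%E.
  move=> M; have eM0 : 0 < e / 2 ^+ M.+1 by rewrite divr_gt0 // exprn_gt0.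
  by have [C ? ?] := small (maxn N M) _ eM0; exists C.
have Cs_cover M : cover_family f Z N delta (Cs M).
  exact: cover_family_le (leq_maxl N M) (Cs_small M).1.
pose CM M := [set p | Cs M p /\ exists2 y, Zs M y & bowen_ball f p.1 p.2 delta y].
exists (\bigcup_M CM M).
  by apply: cover_family_bigcup Cs_cover => x /Sn_le [M]; exists M.
apply: esum_bigcup_geometric_le => // [p|M]; first exact: weight_ge0.
apply: le_trans (Cs_small M).2.
apply: (@le_trans _ _ (\esum_(p in CM M) weight eta s p)).
  apply: le_esum => -[x n] [/= CMp [y ZMy xy]].
  have [_ /(_ _ CMp) [_ /= Nn] _] := (Cs_small M).1.
  apply: weight_shift_le; first exact: ltW.
  have := Sn_bowen_ball_le phi_unif xy.
  by have := ZMy n (leq_trans (leq_maxr _ _) Nn); lra.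
by apply: esum_subset => [p []|p] //; exact: weight_ge0.
Qed.

Lemma PZdelta_shift_le Z (eta phi : X -> R) (beta t gam delta : R) :
  0 < t ->
  (forall eps, 0 < eps -> forall x, Z x -> exists M, forall n, (M <= n)%N ->
      Sn f phi n x <= n%:R * (beta + eps)) ->
  (forall a b, mdist a b < delta -> phi a <= phi b + gam) ->
  (PZdelta f Z (fun x => (eta x + t * phi x)%R) delta <=
     PZdelta f Z eta delta + (t * (beta + gam))%:E)%E.
Proof.
move=> t0 Sn_le phi_unif; apply/lee_addgt0Pr => e e0.
have -> : (PZdelta f Z eta delta + (t * (beta + gam))%:E + e%:E =
    PZdelta f Z eta delta + (t * (beta + e / t + gam))%:E)%E.
  by rewrite -addeA -EFinD; congr (_ + _%:E)%E; field; rewrite gt_eqF.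
apply: lee_Dfin_approx => r /ereal_inf_lt [_ [s s0 <-]]; rewrite lte_fin => sr.
apply: (@le_trans _ _ (s + t * (beta + e / t + gam))%:E).
  apply: ereal_inf_lbound; exists (s + t * (beta + e / t + gam)) => //.
  by apply: mP_shift_eq0 => //; apply: Sn_le; rewrite divr_gt0.
by rewrite lee_fin lerD2r ltW.
Qed.

Lemma le_PZdelta Z g (d d' : R) : d' <= d ->
  (PZdelta f Z g d <= PZdelta f Z g d')%E.
Proof.
move=> d'd; apply: ereal_inf_le_tmp => _ [s /mP_eq0P small <-].
exists s => //; apply/mP_eq0P => N e e0.
have [C [cC sC ZC] Ce] := small N e e0; exists C => //; split => //.
move=> x /ZC [p Cp px]; exists p => // k kn.
exact: lt_le_trans (px k kn) d'd.
Qed.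

Lemma PZE_sup Z g : Z !=set0 ->
  PZ f Z g = ereal_sup (PZdelta f Z g @` `]0, +oo[).
Proof.
move=> /set0P/eqP Z0; rewrite /PZ; case: pselect => //= _.
apply/cvg_lim => //; apply: (@nonincreasing_at_right_cvge _ _ 0 (BInfty _ false)) => //.
by move=> a b _ _; exact: le_PZdelta.
Qed.

Lemma PZ_shift_le Z (eta phi : X -> R) (beta t : R) :
  compact [set: X] -> continuous phi -> 0 < t ->
  (forall x, Z x ->
     (limn_esup (fun n : nat => ((n%:R)^-1 * Sn f phi n x)%:E) <= beta%:E)%E) ->
  (PZ f Z (fun x => (eta x + t * phi x)%R) <= PZ f Z eta + (beta * t)%:E)%E.
Proof.
move=> cX cphi t0 avg_le.
have [->|/set0P Z0] := eqVneq Z set0.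
  by rewrite /PZ; case: pselect => // _; rewrite leNye.
rewrite !PZE_sup //; apply: ge_ereal_sup => _ [d /= /[!in_itv] /= /andP[d0 _] <-].
apply/lee_addgt0Pr => e e0.
have [d1 d10 unif] := compact_uniform_continuous cX cphi (divr_gt0 e0 t0).
set d2 := Num.min d d1; have d20 : 0 < d2 by rewrite lt_min d0 d10.
have [d2d d2d1] : d2 <= d /\ d2 <= d1 by rewrite !ge_min !lexx orbT.
apply: (le_trans (le_PZdelta Z _ d2d)).
apply: (le_trans (@PZdelta_shift_le Z eta phi beta t (e / t) _ t0 _ _)).
- by move=> eps eps0 x Zx; exact: Sn_eventually_le (avg_le x Zx) eps eps0.
- move=> a b /lt_le_trans /(_ d2d1) /unif /ltW.
  by have := ler_norm (phi a - phi b); lra.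
have -> : (t * (beta + e / t))%:E = ((beta * t)%:E + e%:E)%E.
  by rewrite -EFinD; congr (_%:E); field; rewrite gt_eqF.
rewrite addeA; do 2 apply: leeD2r.
by apply: ereal_sup_ubound; exists d2 => //=; rewrite in_itv /= d20.
Qed.

End Pressure.

Theorem lemma4p8 (R : realType) (X : metricType R) (f : X -> X)
    (eta phi : X -> R) (Z : set X) (alpha beta : R) :
  compact [set: X] -> continuous f -> (htop f < +oo)%E ->
  continuous eta -> continuous phi ->
  (forall x, Z x ->
     [/\ (alpha%:E <= limn_einf (fun n : nat => ((n%:R)^-1 * Sn f phi n x)%:E))%E,
         (limn_einf (fun n : nat => ((n%:R)^-1 * Sn f phi n x)%:E)
            <= limn_esup (fun n : nat => ((n%:R)^-1 * Sn f phi n x)%:E))%E &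
         (limn_esup (fun n : nat => ((n%:R)^-1 * Sn f phi n x)%:E) <= beta%:E)%E]) ->
  forall t : R, 0 < t ->
    (PZ f Z eta + (alpha * t)%:E <= PZ f Z (fun x => (eta x + t * phi x)%R))%E /\
    (PZ f Z (fun x => (eta x + t * phi x)%R) <= PZ f Z eta + (beta * t)%:E)%E.
Proof.
move=> cX _ _ _ cphi avg_bounds t t0; split; last first.
  by apply: PZ_shift_le => // x /avg_bounds [].
have cNphi : continuous (fun y => - phi y) by move=> x; apply: cvgN; exact: cphi.
have := PZ_shift_le (fun x => eta x + t * phi x) (beta := - alpha) cX cNphi t0.
have -> : (fun x => (eta x + t * phi x) + t * - phi x) = eta.
  by apply: boolp.funext => x; ring.
rewrite mulNr EFinN => shift_le; rewrite -leeBrDr //; apply: shift_le => x /avg_bounds [alpha_le _ _].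
have -> : (fun n : nat => ((n%:R)^-1 * Sn f (fun y => - phi y) n x)%:E) =
    -%E \o (fun n : nat => ((n%:R)^-1 * Sn f phi n x)%:E).
  by apply: boolp.funext => n /=; rewrite /Sn sumrN mulrN.
by rewrite limn_esupN leeN2.
Qed.
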